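(* Let $k,\ell,t$ be positive integers with $k$ even, and write $q:=2^k$ and $Q:=2^\ell$. Let $\operatorname{ord}_2(n)$ denote the largest nonnegative integer $i$ with $2^i\mid n$. Let $D(X)\in\mathbb{F}_2[X]$ be such that either (a) $\operatorname{ord}_2(\ell)\le\operatorname{ord}_2(k)$ and $D(X)=X^{Q+1}+X+1$; or (b) $\operatorname{ord}_2(\ell)\ne\operatorname{ord}_2(k)$ and $D(X)=X^Q+X+1$. Then: (1) If $r$ is a positive integer such that $\gcd(r,q-1)=1$ and $r\equiv Q+1+2t\pmod{q+1}$, then $X^r B(X^{q-1})$ permutes $\mathbb{F}_{q^2}$, where $B(X):=D(X)\cdot (X^{2t}+X^t+1)$. (2) If either $\ell$ is even and (a) holds, or $\ell$ is odd and (b) holds, then $B(X):=D(X)/(X^2+X+1)$ lies in $\mathbb{F}_{q^2}[X]$, and if $r$ is a positive integer such that $\gcd(r,q-1)=1$ and $r\equiv Q-1\pmod{q+1}$, then $X^r B(X^{q-1})$ permutes $\mathbb{F}_{q^2}$.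
   Context: A polynomial $f(X)\in\mathbb{F}_{q^2}[X]$ is said to permute $\mathbb{F}_{q^2}$ if the map $c\mapsto f(c)$ is a bijection of $\mathbb{F}_{q^2}$. Here $\mathbb{F}_2[X]\subseteq\mathbb{F}_{q^2}[X]$. *)

From mathcomp Require Import all_boot all_order all_algebra all_field.
Set Implicit Arguments. Unset Strict Implicit. Unset Printing Implicit Defensive.
Import GRing.Theory.
Local Open Scope ring_scope.

Definition permutes (F : finFieldType) (f : {poly F}) : Prop :=
  bijective (fun c : F => f.[c]).

Definition xrB (F : finFieldType) (r q : nat) (B : {poly F}) : {poly F} :=
  'X^r * (B \Po 'X^(q - 1)%N).

Definition ord2 (n : nat) : nat := logn 2 n.

(* On the unit circle mu = {z : z^(q+1) = 1} of F_(q^2), a polynomial with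
   coefficients in F_2 satisfies B(z)^q = B(1/z), so by the usual criterion
   X^r B(X^(q-1)) permutes F_(q^2) as soon as gcd(r, q-1) = 1 and
   z |-> z^r B(1/z) / B(z) is injective on mu.  The self-reciprocal factors
   X^(2t) + X^t + 1 and X^2 + X + 1 drop out of this ratio, so in both parts it
   equals z^(Q+1) D(1/z) / D(z).  As k is even, a primitive cube root of unity a
   lies in F_q, and the involution w |-> (w + a)/(a w + 1) of mu conjugates this
   ratio to w |-> (w^e + b)/(b w^e + 1) with e = Q - 1 or Q + 1 and b = a or a^2.
   The hypotheses on ord_2 are exactly what makes w |-> w^e injective on mu:
   if u^e = 1 then u^(2^l) and u^(2^k) are each u or 1/u, and comparing them on
   a common iterate u^(2^L) forces u = 1/u, hence u = 1. *)

From mathcomp Require Import all_boot all_order all_algebra all_field.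
From mathcomp Require Import all_fingroup all_solvable.
From mathcomp Require Import ring zify.
Set Implicit Arguments. Unset Strict Implicit. Unset Printing Implicit Defensive.
Import GRing.Theory.
Local Open Scope ring_scope.

Definition circle (F : fieldType) (q : nat) : pred F := [pred z | z ^+ q.+1 == 1].

Section Circle.
Variables (F : fieldType) (q : nat).
Implicit Types y z : F.

Lemma circle_neq0 z : z \in circle q -> z != 0.
Proof. by rewrite inE; apply: contraTneq => ->; rewrite expr0n eq_sym oner_eq0. Qed.

Lemma circle_expr z : z \in circle q -> z ^+ q = z^-1.
Proof.
move=> zC; apply: (mulIf (circle_neq0 zC)).
by rewrite -exprSr mulVf ?circle_neq0 //; apply/eqP.
Qed.

Lemma circleM : {in circle q &, forall y z, y * z \in circle q}.
Proof. by move=> y z; rewrite !inE exprMn => /eqP-> /eqP->; rewrite mulr1. Qed.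

Lemma circleV : {in circle q, forall z, z^-1 \in circle q}.
Proof. by move=> z; rewrite !inE exprVn => /eqP->; rewrite invr1. Qed.

Lemma circleX n : {in circle q, forall z, z ^+ n \in circle q}.
Proof. by move=> z; rewrite !inE exprAC => /eqP->; rewrite expr1n. Qed.

End Circle.

Lemma expf_coprime_eq1 (F : fieldType) (u : F) m n :
  coprime m n -> u ^+ m = 1 -> u ^+ n = 1 -> u = 1.
Proof.
case: m => [|m]; first by rewrite /coprime gcd0n => /eqP-> _; rewrite expr1.
move=> co_mn um un; have [km kn + _] := egcdnP n (ltn0Sn m).
rewrite (eqP co_mn) addn1 => /(congr1 (fun e => u ^+ e)).
by rewrite exprS [(km * _)%N]mulnC [(kn * _)%N]mulnC !exprM um un !expr1n mulr1.
Qed.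

Lemma xrB_permutes (F : finFieldType) (q r : nat) (B : {poly F}) :
  #|F| = (q * q)%N -> (0 < r)%N -> coprime r (q - 1) ->
  {in circle q, forall z, B.[z] != 0} ->
  {in circle q &, injective (fun z => z ^+ r * B.[z] ^+ (q - 1))} ->
  permutes (xrB r q B).
Proof.
move=> cardF r_gt0 co_r B_neq0 g_inj.
have q_gt0 : (0 < q)%N.
  by move: (finNzRing_gt1 F); rewrite cardF lt0n; apply: contraTneq => ->.
have circle_pow (x : F) : x != 0 -> x ^+ (q - 1) \in circle q.
  move=> x0; rewrite inE -exprM.
  have -> : ((q - 1) * q.+1 = #|F|.-1)%N by rewrite cardF -subn1; nia.
  apply/eqP/(mulIf x0); rewrite mul1r -exprSr prednK ?expf_card //.
  by rewrite cardF muln_gt0 q_gt0.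
pose f x := x ^+ r * B.[x ^+ (q - 1)].
have fE x : (xrB r q B).[x] = f x by rewrite hornerM hornerXn horner_comp hornerXn.
have f_neq0 x : x != 0 -> f x != 0.
  by move=> x0; rewrite mulf_neq0 ?expf_neq0 ?B_neq0 ?circle_pow.
have f0 : f 0 = 0 by rewrite /f expr0n gtn_eqF // mul0r.
have f_expr x : f x ^+ (q - 1) = (x ^+ (q - 1)) ^+ r * B.[x ^+ (q - 1)] ^+ (q - 1).
  by rewrite exprMn exprAC.
apply: injF_bij => x y; rewrite /= !fE.
have [->|x0] := eqVneq x 0; have [->|y0] := eqVneq y 0 => //.
- by rewrite f0 => /esym/eqP; rewrite (negbTE (f_neq0 y y0)).
- by rewrite f0 => /eqP; rewrite (negbTE (f_neq0 x x0)).
move=> fxy; have xy_expr : x ^+ (q - 1) = y ^+ (q - 1).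
  by apply: g_inj; rewrite ?circle_pow // -!f_expr fxy.
have xy_r : x ^+ r = y ^+ r.
  by move: fxy; rewrite /f xy_expr; apply: mulIf; rewrite B_neq0 ?circle_pow.
apply/divr1_eq/(expf_coprime_eq1 co_r).
  by rewrite expr_div_n xy_r divff // expf_neq0.
by rewrite expr_div_n xy_expr divff // expf_neq0.
Qed.

Section FrobeniusOrbits.
Variable F : fieldType.
Implicit Types u : F.

Lemma expr2n_mul_fix u m j : u ^+ (2 ^ m) = u -> u ^+ (2 ^ (m * j)) = u.
Proof.
by move=> um; elim: j => [|j IH]; rewrite ?muln0 ?expr1 // mulnSr expnD exprM IH um.
Qed.

Lemma expr2n_mul_inv u m j :
  u ^+ (2 ^ m) = u^-1 -> u ^+ (2 ^ (m * j)) = if odd j then u^-1 else u.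
Proof.
move=> um; elim: j => [|j IH]; first by rewrite muln0 expr1.
by rewrite mulnSr expnD exprM IH /=; case: (odd j); rewrite ?exprVn um ?invrK.
Qed.

(* With y' the odd part of y, L := x y' is a multiple of y as ord2 y <= ord2 x,
   and u^(2^L) is u^-1 by the first hypothesis and u by the second. *)
Lemma expr2n_inv_fix u x y : (0 < x)%N -> (0 < y)%N -> (logn 2 y <= logn 2 x)%N ->
  u ^+ (2 ^ x) = u^-1 -> u ^+ (2 ^ y) = u -> u^-1 = u.
Proof.
move=> x_gt0 y_gt0 le_yx ux uy.
have [x' _ ex] := pfactor_coprime (isT : prime 2) x_gt0.
have [y' y'_odd ey] := pfactor_coprime (isT : prime 2) y_gt0.
rewrite coprime2n in y'_odd.
set al := logn 2 x in le_yx ex; set be := logn 2 y in le_yx ey.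
have exy : (x * y' = y * (x' * 2 ^ (al - be)))%N.
  by rewrite ex ey -(subnKC le_yx) expnD addKn; ring.
by have := expr2n_mul_inv y' ux; rewrite y'_odd exy expr2n_mul_fix.
Qed.

Lemma expr2n_inv_inv u x y : (0 < x)%N -> (0 < y)%N -> (logn 2 x < logn 2 y)%N ->
  u ^+ (2 ^ x) = u^-1 -> u ^+ (2 ^ y) = u^-1 -> u^-1 = u.
Proof.
move=> x_gt0 y_gt0 lt_xy ux uy; apply: (expr2n_inv_fix (y := x * 2) y_gt0 _ _ uy).
- by rewrite muln_gt0 x_gt0.
- by rewrite lognM // addn1.
- by rewrite (expr2n_mul_inv 2 ux).
Qed.

End FrobeniusOrbits.

Definition recip_ratio (F : fieldType) (n : nat) (p : {poly F}) (z : F) : F :=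
  z ^+ n * p.[z^-1] / p.[z].

Section RecipRatio.
Variable F : fieldType.
Implicit Types (p : {poly F}) (z : F).

Lemma recip_ratioM m n p p' z :
  recip_ratio (m + n) (p * p') z = recip_ratio m p z * recip_ratio n p' z.
Proof. by rewrite /recip_ratio !hornerM exprD invfM; ring. Qed.

Lemma recip_ratio_trinomial t z : z != 0 -> ('X^(2 * t) + 'X^t + 1).[z] != 0 ->
  recip_ratio (2 * t) ('X^(2 * t) + 'X^t + 1) z = 1.
Proof.
move=> z0; rewrite /recip_ratio !hornerE mulnC !exprM !exprVn => T0.
by field; rewrite T0 expf_neq0.
Qed.

Lemma horner_DA Q z : ('X^(Q + 1) + 'X + 1).[z] = z ^+ Q * z + z + 1.
Proof. by rewrite !hornerE exprD expr1. Qed.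

Lemma recip_ratio_DA Q z : z != 0 -> recip_ratio (Q + 1) ('X^(Q + 1) + 'X + 1) z =
  (z ^+ Q * z + z ^+ Q + 1) / (z ^+ Q * z + z + 1).
Proof.
move=> z0; rewrite /recip_ratio !hornerE addn1 !exprSr exprVn; congr (_ / _).
by field; rewrite z0 expf_neq0.
Qed.

Lemma horner_DB Q z : ('X^Q + 'X + 1).[z] = z ^+ Q + z + 1.
Proof. by rewrite !hornerE. Qed.

Lemma recip_ratio_DB Q z : z != 0 -> recip_ratio (Q + 1) ('X^Q + 'X + 1) z =
  (z ^+ Q * z + z ^+ Q + z) / (z ^+ Q + z + 1).
Proof.
move=> z0; rewrite /recip_ratio !hornerE addn1 !exprSr exprVn; congr (_ / _).
by field; rewrite z0 expf_neq0.
Qed.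

End RecipRatio.

Lemma exp2n_mod3 n : (2 ^ n %% 3 = if odd n then 2 else 1)%N.
Proof. by elim: n => // n IH; rewrite expnS -modnMmr IH /=; case: (odd n). Qed.

Section CubeRoots.
Variables (F : fieldType) (a : F).
Hypothesis a_cube : a ^+ 2 + a + 1 = 0.

Lemma cube_root_exp3 : a ^+ 3 = 1.
Proof.
apply/eqP; rewrite -subr_eq0.
have -> : a ^+ 3 - 1 = (a - 1) * (a ^+ 2 + a + 1) by ring.
by rewrite a_cube mulr0.
Qed.

Lemma cube_root_exp2n n : a ^+ (2 ^ n) = if odd n then a ^+ 2 else a.
Proof. by rewrite -(expr_mod _ cube_root_exp3) exp2n_mod3; case: (odd n). Qed.

Lemma cube_root_sqr : (a ^+ 2) ^+ 2 + a ^+ 2 + 1 = 0.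
Proof. by rewrite -exprM (cube_root_exp2n 2) (addrC a). Qed.

Lemma cube_root_neq0 : a != 0.
Proof. by apply/eqP => a0; move/eqP: a_cube; rewrite a0 expr0n !add0r oner_eq0. Qed.

Lemma root_DA_cube l : ~~ odd l -> root ('X^(2 ^ l + 1) + 'X + 1) a.
Proof.
by move=> l_even; rewrite /root horner_DA cube_root_exp2n (negbTE l_even) -expr2 a_cube.
Qed.

Lemma root_DB_cube l : odd l -> root ('X^(2 ^ l) + 'X + 1) a.
Proof. by move=> l_odd; rewrite /root horner_DB cube_root_exp2n l_odd a_cube. Qed.

End CubeRoots.

Definition mobius (F : fieldType) (a z : F) : F := (z + a) / (a * z + 1).

Lemma mobius_of_cleared (F : fieldType) (Dz Nz cc s b v : F) :
  cc != 0 -> s != 0 -> b * v + 1 != 0 ->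
  Dz * cc = s * (b * v + 1) -> Nz * cc = s * (v + b) ->
  Dz != 0 /\ Nz / Dz = mobius b v.
Proof.
move=> cc0 s0 den0 eD eN; have Dz0 : Dz != 0.
  by apply: contra_neq (mulf_neq0 s0 den0) => Dz0; rewrite -eD Dz0 mul0r.
split=> //; rewrite -(mulfK cc0 Nz) -(mulfK cc0 Dz) eN eD /mobius.
by field; rewrite cc0 s0 den0.
Qed.

Section Char2.
Variables (F : fieldType) (charF : 2 \in [pchar F]).
Implicit Types (a u x y z : F) (p : {poly F}).

Lemma exprD2n x y n : (x + y) ^+ (2 ^ n) = x ^+ (2 ^ n) + y ^+ (2 ^ n).
Proof. by apply: exprDn_pchar; rewrite (eq_pnat _ (pcharf_eq charF)) pnatX pnat_id. Qed.

Lemma sqrf_eq1_pchar2 u : u ^+ 2 = 1 -> u = 1.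
Proof. by move/eqP; rewrite sqrf_eq1 (oppr_pchar2 charF) orbb => /eqP. Qed.

(* Checks identities modulo 2 = 0 and a^2 + a + 1 = 0 with ring: the witnesses
   c1, c2 passed below are the quotient of x - y by a^2 + a + 1 and half of the
   remainder. *)
Lemma eq_mod_cube a x y c1 c2 : a ^+ 2 + a + 1 = 0 ->
  x - y = c1 * (a ^+ 2 + a + 1) + c2 *+ 2 -> x = y.
Proof.
move=> a_cube; rewrite a_cube mulr0 add0r mulr2n (addrr_pchar2 charF).
by move/eqP; rewrite subr_eq0 => /eqP.
Qed.

Lemma cube_root_neq1 a : a ^+ 2 + a + 1 = 0 -> a != 1.
Proof.
move=> a_cube; apply/eqP => a1; move/eqP: a_cube.
by rewrite a1 expr1n (addrr_pchar2 charF) add0r oner_eq0.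
Qed.

Lemma dvdp_cube_poly a (D : {poly F}) : a ^+ 2 + a + 1 = 0 ->
  (forall c, c ^+ 2 + c + 1 = 0 -> root D c) -> ('X^2 + 'X + 1) %| D.
Proof.
move=> a_cube D_roots; have a0 := cube_root_neq0 a_cube.
have sum_a : a + a ^+ 2 = -1 by apply/eqP; rewrite -subr_eq0 opprK (addrC a) a_cube.
have prod_a : a * a ^+ 2 = 1 by rewrite -exprS cube_root_exp3.
have -> : 'X^2 + 'X + 1 = ('X - a%:P) * ('X - (a ^+ 2)%:P).
  have -> : ('X - a%:P) * ('X - (a ^+ 2)%:P) =
            'X^2 - (a + a ^+ 2)%:P * 'X + (a * a ^+ 2)%:P by rewrite polyCD polyCM; ring.
  by rewrite sum_a prod_a polyCN polyC1; ring.
have a2_neq_a : a ^+ 2 - a != 0.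
  rewrite subr_eq0; apply: contra (cube_root_neq1 a_cube) => /eqP a2a.
  by apply/eqP/(mulfI a0); rewrite mulr1 -expr2.
by rewrite Gauss_dvdp ?coprimep_XsubC2 // !dvdp_XsubCl !D_roots ?cube_root_sqr.
Qed.

Definition frob_fixed p := map_poly (pFrobenius_aut charF) p = p.

Lemma frob_fixed_trinomial m n : frob_fixed ('X^m + 'X^n + 1).
Proof. by rewrite /frob_fixed !rmorphD rmorph1 /= !map_polyXn. Qed.

Lemma horner_frob_fixed p z n : frob_fixed p -> p.[z] ^+ (2 ^ n) = p.[z ^+ (2 ^ n)].
Proof.
move=> p_fixed; elim: n => [|n IH]; first by rewrite !expr1.
by rewrite expnSr !exprM IH -!(pFrobenius_autE charF) -horner_map p_fixed.
Qed.

Lemma mobius_exp2n a z n : mobius a z ^+ (2 ^ n) = mobius (a ^+ (2 ^ n)) (z ^+ (2 ^ n)).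
Proof. by rewrite /mobius expr_div_n !exprD2n exprMn expr1n. Qed.

End Char2.

Section UnitCircle.
Variables (F : fieldType) (charF : 2 \in [pchar F]) (k : nat).
Hypothesis k_even : ~~ odd k.
Local Notation q := (2 ^ k)%N.
Implicit Types (a b u v w z : F) (p : {poly F}).

Lemma cube_root_notin_circle a : a ^+ 2 + a + 1 = 0 -> a \notin circle q.
Proof.
move=> a_cube; rewrite inE exprSr (cube_root_exp2n a_cube) (negbTE k_even) -expr2.
by apply: contra (cube_root_neq1 charF a_cube) => /eqP/(sqrf_eq1_pchar2 charF)->.
Qed.

Lemma circle_cube_poly_neq0 v : v \in circle q -> v ^+ 2 + v + 1 != 0.
Proof. by apply: contraTneq => /cube_root_notin_circle/negbTE->. Qed.

Lemma mobius_den_neq0 a z : a ^+ 2 + a + 1 = 0 -> z \in circle q -> a * z + 1 != 0.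
Proof.
move=> a_cube zC; apply: contraNneq (cube_root_notin_circle (cube_root_sqr a_cube)).
move/eqP; rewrite addr_eq0 (oppr_pchar2 charF) => /eqP az1.
suff -> : a ^+ 2 = z by [].
by apply: (mulfI (cube_root_neq0 a_cube)); rewrite az1 -exprS cube_root_exp3.
Qed.

Lemma mobius_circle a z : a ^+ 2 + a + 1 = 0 -> z \in circle q -> mobius a z \in circle q.
Proof.
move=> a_cube zC; have z0 := circle_neq0 zC.
rewrite inE exprSr (mobius_exp2n charF) (cube_root_exp2n a_cube) (negbTE k_even).
rewrite (circle_expr zC) /mobius mulf_div.
have -> : (z^-1 + a) * (z + a) = (a * z^-1 + 1) * (a * z + 1).
  apply/eqP; rewrite -subr_eq0.
  have -> : (z^-1 + a) * (z + a) - (a * z^-1 + 1) * (a * z + 1) =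
            (z^-1 * z - 1) * (1 - a ^+ 2) by ring.
  by rewrite mulVf // subrr mul0r.
by rewrite divff // mulf_neq0 // mobius_den_neq0 // circleV.
Qed.

Lemma mobiusK a : a ^+ 2 + a + 1 = 0 -> {in circle q, involutive (mobius a)}.
Proof.
move=> a_cube z zC; have d0 := mobius_den_neq0 a_cube zC.
have a0 := cube_root_neq0 a_cube.
rewrite {1}/mobius; set d := a * z + 1 in d0 *.
have num : mobius a z + a = a * z / d.
  apply: (mulIf d0); rewrite mulrDl !divfK //.
  by apply: (eq_mod_cube charF (c1 := z) (c2 := a - a * z) a_cube); rewrite /d; ring.
have den : a * mobius a z + 1 = a / d.
  apply: (mulIf d0); rewrite mulrDl -mulrA !divfK //.
  by apply: (eq_mod_cube charF (c1 := 1) (c2 := a * z - a) a_cube); rewrite /d; ring.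
by rewrite num den; field; rewrite a0 d0.
Qed.

Lemma mobius_inj a : a ^+ 2 + a + 1 = 0 -> {in circle q &, injective (mobius a)}.
Proof. by move=> a_cube x y xC yC exy; rewrite -(mobiusK a_cube xC) exy mobiusK. Qed.

Lemma circle_expr_inj e : {in circle q, forall u, u ^+ e = 1 -> u^-1 = u} ->
  {in circle q &, injective (fun w => w ^+ e)}.
Proof.
move=> e_triv v w vC wC /= evw; have w0 := circle_neq0 wC.
have uC : v / w \in circle q by rewrite circleM ?circleV.
apply/divr1_eq/(sqrf_eq1_pchar2 charF).
rewrite expr2 -{1}(e_triv _ uC) ?mulVf ?(circle_neq0 uC) //.
by rewrite expr_div_n evw divff // expf_neq0.
Qed.

Lemma circle_exp_pred_inj l : (0 < k)%N -> (0 < l)%N -> (logn 2 l <= logn 2 k)%N ->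
  {in circle q &, injective (fun w : F => w ^+ (2 ^ l - 1))}.
Proof.
move=> k_gt0 l_gt0 le_lk; apply: circle_expr_inj => u uC u1.
apply: (expr2n_inv_fix k_gt0 l_gt0 le_lk (circle_expr uC)).
by rewrite -(subnK (expn_gt0 2 l)) exprD u1 mul1r.
Qed.

Lemma circle_exp_succ_inj l : (0 < k)%N -> (0 < l)%N -> logn 2 l != logn 2 k ->
  {in circle q &, injective (fun w : F => w ^+ (2 ^ l + 1))}.
Proof.
move=> k_gt0 l_gt0 ne_lk; apply: circle_expr_inj => u uC u1.
have u0 := circle_neq0 uC.
have ul : u ^+ (2 ^ l) = u^-1 by apply: (mulIf u0); rewrite -exprSr -addn1 u1 mulVf.
have uk := circle_expr uC.
case: (ltngtP (logn 2 l) (logn 2 k)) ne_lk => // [lt_lk|lt_kl] _.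
- exact: expr2n_inv_inv l_gt0 k_gt0 lt_lk ul uk.
- exact: expr2n_inv_inv k_gt0 l_gt0 lt_kl uk ul.
Qed.

Lemma circle_expr_mod z m n : z \in circle q -> m = n %[mod q.+1] -> z ^+ m = z ^+ n.
Proof. by move=> /eqP zq mn; rewrite -(expr_mod m zq) mn expr_mod. Qed.

Lemma circle_recip_ratio p n z : frob_fixed charF p -> z \in circle q -> p.[z] != 0 ->
  z ^+ n * p.[z] ^+ (q - 1) = recip_ratio n p z.
Proof.
move=> p_fixed zC pz0; rewrite /recip_ratio -(circle_expr zC).
rewrite -(horner_frob_fixed _ _ p_fixed) -mulrA; congr (_ * _).
by apply: (mulIf pz0); rewrite divfK // -exprSr subn1 prednK ?expn_gt0.
Qed.

Lemma injective_mobius_conj (h : F -> F) a b e :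
  a ^+ 2 + a + 1 = 0 -> b ^+ 2 + b + 1 = 0 ->
  {in circle q &, injective (fun w => w ^+ e)} ->
  {in circle q, forall w, h (mobius a w) = mobius b (w ^+ e)} ->
  {in circle q &, injective h}.
Proof.
move=> a_cube b_cube e_inj hE z1 z2 z1C z2C h12.
have w1C := mobius_circle a_cube z1C; have w2C := mobius_circle a_cube z2C.
rewrite -(mobiusK a_cube z1C) -(mobiusK a_cube z2C); congr (mobius a _).
apply: e_inj => //; apply: (mobius_inj b_cube); rewrite ?circleX //.
by rewrite -!hE ?mobiusK.
Qed.

(* In the coordinate w with z = mobius a w, Frobenius gives z^Q = mobius c w^Q.
   Clearing the denominators A A' turns D(z) and z^(Q+1) D(1/z) into
   s (b v + 1) and s (v + b) with v = w^(Q-1) or w^(Q+1). *)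
Section MobiusCoordinates.
Variables (l : nat) (a w : F).
Hypotheses (a_cube : a ^+ 2 + a + 1 = 0) (wC : w \in circle q).
Local Notation Q := (2 ^ l)%N.
Let z := mobius a w.
Let c := a ^+ Q.
Let A := a * w + 1.
Let A' := c * w ^+ Q + 1.

Let c_cube : c ^+ 2 + c + 1 = 0.
Proof. by rewrite /c (cube_root_exp2n a_cube); case: odd; rewrite ?cube_root_sqr. Qed.
Let A_neq0 : A != 0 := mobius_den_neq0 a_cube wC.
Let A'_neq0 : A' != 0 := mobius_den_neq0 c_cube (circleX _ wC).
Let zA : z * A = w + a := divfK A_neq0 (w + a).
Let ZA' : z ^+ Q * A' = w ^+ Q + c.
Proof. by rewrite /z (mobius_exp2n charF) divfK. Qed.
Let z_neq0 : z != 0 := circle_neq0 (mobius_circle a_cube wC).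
Let W_pred : w ^+ Q = w ^+ (Q - 1) * w.
Proof. by rewrite -exprSr subn1 prednK ?expn_gt0. Qed.

Lemma mobius_DA_even : ~~ odd l ->
  ('X^(Q + 1) + 'X + 1).[z] != 0 /\
  recip_ratio (Q + 1) ('X^(Q + 1) + 'X + 1) z = mobius (a ^+ 2) (w ^+ (Q - 1)).
Proof.
move=> l_even; have c_a : c = a by rewrite /c (cube_root_exp2n a_cube) (negbTE l_even).
rewrite recip_ratio_DA // horner_DA.
apply: (mobius_of_cleared (cc := A * A') (s := w)).
- exact: mulf_neq0.
- exact: circle_neq0 wC.
- exact: mobius_den_neq0 (cube_root_sqr a_cube) (circleX _ wC).
- transitivity (z ^+ Q * A' * (z * A) + z * A * A' + A * A'); first by ring.
  rewrite zA ZA' /A /A' c_a W_pred; set v := w ^+ (Q - 1).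
  apply: (eq_mod_cube charF (c1 := 1 + w ^+ 2 * v) (c2 := a * w + a * w * v) a_cube).
  ring.
- transitivity (z ^+ Q * A' * (z * A) + z ^+ Q * A' * A + A * A'); first by ring.
  rewrite zA ZA' /A /A' c_a W_pred; set v := w ^+ (Q - 1).
  apply: (eq_mod_cube charF (c1 := 1 + w ^+ 2 * v) (c2 := a * w + a * w * v) a_cube).
  ring.
Qed.

Lemma mobius_DA_odd : odd l ->
  ('X^(Q + 1) + 'X + 1).[z] != 0 /\
  recip_ratio (Q + 1) ('X^(Q + 1) + 'X + 1) z = mobius a (w ^+ (Q + 1)).
Proof.
move=> l_odd; have c_a2 : c = a ^+ 2 by rewrite /c (cube_root_exp2n a_cube) l_odd.
rewrite recip_ratio_DA // horner_DA exprD expr1.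
apply: (mobius_of_cleared (cc := A * A') (s := a)).
- exact: mulf_neq0.
- exact: cube_root_neq0 a_cube.
- exact: mobius_den_neq0 a_cube (circleM (circleX _ wC) wC).
- transitivity (z ^+ Q * A' * (z * A) + z * A * A' + A * A'); first by ring.
  rewrite zA ZA' /A /A' c_a2; set W := w ^+ Q.
  apply: (eq_mod_cube charF (c1 := -1 + w - w * W + a + a * W + a * w * W)
                            (c2 := 1 + w * W) a_cube); ring.
- transitivity (z ^+ Q * A' * (z * A) + z ^+ Q * A' * A + A * A'); first by ring.
  rewrite zA ZA' /A /A' c_a2; set W := w ^+ Q.
  apply: (eq_mod_cube charF (c1 := -1 + W - w * W + a + a * w + a * w * W)
                            (c2 := 1 + w * W) a_cube); ring.
Qed.

Lemma mobius_DB_even : ~~ odd l ->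
  ('X^Q + 'X + 1).[z] != 0 /\
  recip_ratio (Q + 1) ('X^Q + 'X + 1) z = mobius (a ^+ 2) (w ^+ (Q + 1)).
Proof.
move=> l_even; have c_a : c = a by rewrite /c (cube_root_exp2n a_cube) (negbTE l_even).
rewrite recip_ratio_DB // horner_DB exprD expr1.
apply: (mobius_of_cleared (cc := A * A') (s := 1)).
- exact: mulf_neq0.
- exact: oner_neq0.
- exact: mobius_den_neq0 (cube_root_sqr a_cube) (circleM (circleX _ wC) wC).
- transitivity (z ^+ Q * A' * A + z * A * A' + A * A'); first by ring.
  rewrite zA ZA' /A /A' c_a; set W := w ^+ Q.
  apply: (eq_mod_cube charF (c1 := W + w) (c2 := a + a * w * W) a_cube); ring.
- transitivity (z ^+ Q * A' * (z * A) + z ^+ Q * A' * A + z * A * A'); first by ring.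
  rewrite zA ZA' /A /A' c_a; set W := w ^+ Q.
  apply: (eq_mod_cube charF (c1 := W + w) (c2 := a + a * w * W) a_cube); ring.
Qed.

Lemma mobius_DB_odd : odd l ->
  ('X^Q + 'X + 1).[z] != 0 /\
  recip_ratio (Q + 1) ('X^Q + 'X + 1) z = mobius a (w ^+ (Q - 1)).
Proof.
move=> l_odd; have c_a2 : c = a ^+ 2 by rewrite /c (cube_root_exp2n a_cube) l_odd.
rewrite recip_ratio_DB // horner_DB.
apply: (mobius_of_cleared (cc := A * A') (s := a * w)).
- exact: mulf_neq0.
- by rewrite mulf_neq0 ?(cube_root_neq0 a_cube) ?(circle_neq0 wC).
- exact: mobius_den_neq0 a_cube (circleX _ wC).
- transitivity (z ^+ Q * A' * A + z * A * A' + A * A'); first by ring.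
  rewrite zA ZA' /A /A' c_a2 W_pred; set v := w ^+ (Q - 1).
  apply: (eq_mod_cube charF
    (c1 := 1 - w - w * v + a * w + a * w * v + a * w ^+ 2 * v) (c2 := w + w * v) a_cube).
  ring.
- transitivity (z ^+ Q * A' * (z * A) + z ^+ Q * A' * A + z * A * A'); first by ring.
  rewrite zA ZA' /A /A' c_a2 W_pred; set v := w ^+ (Q - 1).
  apply: (eq_mod_cube charF
    (c1 := - w - w * v + w ^+ 2 * v + a + a * w + a * w * v) (c2 := w + w * v) a_cube).
  ring.
Qed.

End MobiusCoordinates.

Lemma D_neq0_recip_ratio_inj l D a : (0 < k)%N -> (0 < l)%N -> a ^+ 2 + a + 1 = 0 ->
  ((logn 2 l <= logn 2 k)%N /\ D = 'X^(2 ^ l + 1) + 'X + 1) \/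
  (logn 2 l <> logn 2 k /\ D = 'X^(2 ^ l) + 'X + 1) ->
  {in circle q, forall z, D.[z] != 0} /\
  {in circle q &, injective (recip_ratio (2 ^ l + 1) D)}.
Proof.
move=> k_gt0 l_gt0 a_cube hD.
have log_odd : odd l -> logn 2 l = 0%N by move=> l_odd; rewrite logn_coprime ?coprime2n.
have logk_gt0 : (0 < logn 2 k)%N by rewrite logn_gt0 mem_primes k_gt0 dvdn2 k_even.
suff [b [e [b_cube e_inj D_mob]]] : exists b e, [/\ b ^+ 2 + b + 1 = 0,
    {in circle q &, injective (fun w : F => w ^+ e)} &
    {in circle q, forall w, D.[mobius a w] != 0 /\
                            recip_ratio (2 ^ l + 1) D (mobius a w) = mobius b (w ^+ e)}].
  split=> [z zC|].
    by rewrite -(mobiusK a_cube zC); case: (D_mob _ (mobius_circle a_cube zC)).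
  by apply: (injective_mobius_conj a_cube b_cube e_inj) => w wC; case: (D_mob w wC).
case: hD => [[le_lk ->] | [ne_lk ->]]; have [l_odd | l_even] := boolP (odd l).
- exists a, (2 ^ l + 1)%N; split=> // [|w wC]; last exact: mobius_DA_odd.
  by apply: circle_exp_succ_inj; rewrite // log_odd // eq_sym -lt0n.
- exists (a ^+ 2), (2 ^ l - 1)%N; split=> [||w wC]; first exact: cube_root_sqr.
    exact: circle_exp_pred_inj.
  exact: mobius_DA_even.
- exists a, (2 ^ l - 1)%N; split=> // [|w wC]; last exact: mobius_DB_odd.
  by apply: circle_exp_pred_inj; rewrite // log_odd.
- exists (a ^+ 2), (2 ^ l + 1)%N; split=> [||w wC]; first exact: cube_root_sqr.
    by apply: circle_exp_succ_inj => //; apply/eqP.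
  exact: mobius_DB_even.
Qed.

End UnitCircle.

Section Permutations.
Variables (F : finFieldType) (charF : 2 \in [pchar F]) (k l : nat) (D : {poly F}).
Hypotheses (k_even : ~~ odd k) (cardF : #|F| = (2 ^ k * 2 ^ k)%N).
Local Notation q := (2 ^ k)%N.
Hypotheses (D_fixed : frob_fixed charF D) (D_neq0 : {in circle q, forall z, D.[z] != 0})
  (D_inj : {in circle q &, injective (recip_ratio (2 ^ l + 1) D)}).

Lemma xrB_mul_trinomial_permutes t r : (0 < r)%N -> coprime r (q - 1) ->
  r = (2 ^ l + 1 + 2 * t)%N %[mod q + 1] ->
  permutes (xrB r q (D * ('X^(2 * t) + 'X^t + 1))).
Proof.
move=> r_gt0 co_r; rewrite [(q + 1)%N]addn1 => r_mod.
set T := 'X^(2 * t) + 'X^t + 1.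
have T_neq0 z : z \in circle q -> T.[z] != 0.
  by move=> zC; rewrite !hornerE mulnC exprM (circle_cube_poly_neq0 charF k_even) ?circleX.
have B_neq0 z : z \in circle q -> (D * T).[z] != 0.
  by move=> zC; rewrite hornerM mulf_neq0 ?D_neq0 ?T_neq0.
have B_fixed : frob_fixed charF (D * T).
  by rewrite /frob_fixed rmorphM /= D_fixed frob_fixed_trinomial.
have g_eq z : z \in circle q ->
    z ^+ r * (D * T).[z] ^+ (q - 1) = recip_ratio (2 ^ l + 1) D z.
  move=> zC; rewrite (circle_expr_mod zC r_mod) circle_recip_ratio ?B_neq0 //.
  by rewrite recip_ratioM recip_ratio_trinomial ?mulr1 ?T_neq0 ?(circle_neq0 zC).
by apply: xrB_permutes => // z1 z2 z1C z2C /=; rewrite !g_eq //; apply: D_inj.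
Qed.

Lemma xrB_div_cube_poly_permutes r : ('X^2 + 'X + 1) %| D ->
  (0 < r)%N -> coprime r (q - 1) -> r = (2 ^ l - 1)%N %[mod q + 1] ->
  permutes (xrB r q (D %/ ('X^2 + 'X + 1))).
Proof.
move=> P_dvd r_gt0 co_r; rewrite [(q + 1)%N]addn1 => r_mod.
have BP : D %/ ('X^2 + 'X + 1) * ('X^2 + 'X + 1) = D := divpK P_dvd.
have P_neq0 (z : F) : z \in circle q -> ('X^2 + 'X + 1).[z] != 0.
  by move=> zC; rewrite !hornerE; apply: (circle_cube_poly_neq0 charF k_even).
set B := D %/ _ in BP *.
have B_neq0 z : z \in circle q -> B.[z] != 0.
  by move=> zC; apply: contraTneq (D_neq0 zC) => Bz0; rewrite negbK -BP hornerM Bz0 mul0r.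
have B_fixed : frob_fixed charF B.
  by rewrite /frob_fixed map_divp D_fixed (frob_fixed_trinomial charF 2 1).
have g_eq z : z \in circle q -> z ^+ r * B.[z] ^+ (q - 1) = recip_ratio (2 ^ l + 1) D z.
  move=> zC; have z0 := circle_neq0 zC.
  have P_ratio : recip_ratio 2 ('X^2 + 'X + 1) z = 1.
    by move: (recip_ratio_trinomial (t := 1) z0); rewrite muln1 expr1; apply; apply: P_neq0.
  rewrite (circle_expr_mod zC r_mod) circle_recip_ratio ?B_neq0 // -BP.
  have -> : (2 ^ l + 1 = 2 ^ l - 1 + 2)%N by have : (0 < 2 ^ l)%N := expn_gt0 2 l; lia.
  by rewrite recip_ratioM P_ratio mulr1.
by apply: xrB_permutes => // z1 z2 z1C z2C /=; rewrite !g_eq //; apply: D_inj.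
Qed.

End Permutations.

Lemma pchar2_of_even_card (F : finFieldType) : ~~ odd #|F| -> 2 \in [pchar F].
Proof.
move=> even_card; have m1 : (-1 : F) = 1.
  by rewrite -{1}(expf_card (-1 : F)) -signr_odd (negbTE even_card).
by rewrite inE /= mulr2n -{1}m1 addNr.
Qed.

Lemma exists_cube_root (F : finFieldType) : (3 %| #|F|.-1)%N ->
  exists a : F, a ^+ 2 + a + 1 = 0.
Proof.
rewrite -card_finField_unit => /(Cauchy (isT : prime 3)) [x _ ox].
exists (val x); have x3 : val x ^+ 3 = 1 by rewrite -FinRing.val_unitX -ox expg_order.
have x1 : val x != 1.
  have : x != 1%g by rewrite -order_gt1 ox.
  by apply: contra_neq => vx1; apply: val_inj; rewrite vx1.
apply/eqP; move: x3 => /eqP; rewrite -subr_eq0.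
have -> : val x ^+ 3 - 1 = (val x - 1) * (val x ^+ 2 + val x + 1) by ring.
by rewrite mulf_eq0 subr_eq0 (negbTE x1).
Qed.

Theorem corollary5 (k l t : nat) (F : finFieldType) (D : {poly F}) :
  (0 < k)%N -> (0 < l)%N -> (0 < t)%N -> ~~ odd k ->
  #|F| = (2 ^ k * 2 ^ k)%N ->
  let q := (2 ^ k)%N in
  let Q := (2 ^ l)%N in
  let cond_a := (ord2 l <= ord2 k)%N /\ D = 'X^(Q + 1) + 'X + 1 in
  let cond_b := ord2 l <> ord2 k /\ D = 'X^Q + 'X + 1 in
  cond_a \/ cond_b ->
  (forall r : nat, (0 < r)%N -> coprime r (q - 1) ->
     r = (Q + 1 + 2 * t)%N %[mod q + 1] ->
     permutes (xrB r q (D * ('X^(2 * t) + 'X^t + 1)))) /\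
  ((~~ odd l /\ cond_a) \/ (odd l /\ cond_b) ->
     ('X^2 + 'X + 1) %| D /\
     (forall r : nat, (0 < r)%N -> coprime r (q - 1) ->
        r = (Q - 1)%N %[mod q + 1] ->
        permutes (xrB r q (D %/ ('X^2 + 'X + 1))))).
Proof.
move=> k_gt0 l_gt0 _ k_even cardF q Q cond_a cond_b hD.
have charF : 2 \in [pchar F].
  by apply: pchar2_of_even_card; rewrite cardF oddM oddX /= eqn0Ngt k_gt0.
have [a a_cube] : exists a : F, a ^+ 2 + a + 1 = 0.
  apply: exists_cube_root; rewrite cardF -expnMn -subn1 -eqn_mod_dvd ?expn_gt0 //.
  by rewrite -modnXm exp1n.
have [D_neq0 D_inj] := D_neq0_recip_ratio_inj charF k_even k_gt0 l_gt0 a_cube hD.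
have D_fixed : frob_fixed charF D.
  by case: hD => [[_ ->] | [_ ->]]; apply: (frob_fixed_trinomial charF _ 1).
split=> [r | hpar]; first exact: xrB_mul_trinomial_permutes.
have P_dvd : ('X^2 + 'X + 1) %| D.
  apply: (dvdp_cube_poly charF a_cube) => c c_cube.
  by case: hpar => [[l_even [_ ->]] | [l_odd [_ ->]]];
    [apply: root_DA_cube | apply: root_DB_cube].
by split=> // r; apply: xrB_div_cube_poly_permutes P_dvd.
Qed.
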